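(* Fix an iteration $i$ of the algorithm in the context, and let $z=z^{(i)}$, $\lambda=\lambda^{(i)}$, $\nu=\nu^{(i)}$, $s=s^{(i)}$, $d_z=d_z^{(i)}$, $d_\lambda=d_\lambda^{(i)}$, $d_\nu=d_\nu^{(i)}$, $d_s=d_s^{(i)}$. For $\rho\ge0$ let $\phi(t,\rho)=\mathcal{L}_{\mathrm{aug}}^{\rho}(z+td_z,\lambda+td_\lambda,\nu+td_\nu,s+td_s)$ and $\phi'(0,\rho)$ its derivative in $t$ at $t=0$. Then there exists $\hat\rho\ge0$ such that $\sup_{\rho\ge\hat\rho}\phi'(0,\rho)\le-\frac{1}{2\alpha^{(i)}}\|d_z^{(i)}\|^2.$
   Context: Problem: $\min_{z\in\mathbb{R}^n}J(z)$ s.t. $g(z)\le0$, $h(z)=0$, with $J,g,h$ twice continuously differentiable ($g:\mathbb{R}^n\to\mathbb{R}^m$, $h:\mathbb{R}^n\to\mathbb{R}^p$); $\nabla g,\nabla h$ have component gradients as columns. Augmented Lagrangian: $\mathcal{L}_{\mathrm{aug}}^{\rho}(z,\lambda,\nu,s)=J(z)+(g(z)+s)^\top\lambda+h(z)^\top\nu+\frac{\rho}{2}\|g(z)+s\|^2+\frac{\rho}{2}\|h(z)\|^2$. Algorithm: at iterate $z^{(i)}$ with bounded step $\alpha^{(i)}>0$, $d_z^{(i)}$ is the Euclidean projection of $-\alpha^{(i)}\nabla J(z^{(i)})$ onto $\mathcal{C}^{(i)}=\{d: g(z^{(i)})+\nabla g(z^{(i)})^\top d\le0,\ h(z^{(i)})+\nabla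 h(z^{(i)})^\top d=0\}$, with multipliers $\lambda_G^{(i)}\ge0$, $\nu_G^{(i)}$ satisfying $\frac{1}{\alpha^{(i)}}d_z^{(i)}+\nabla J(z^{(i)})+\nabla g(z^{(i)})\lambda_G^{(i)}+\nabla h(z^{(i)})\nu_G^{(i)}=0$, $\mathrm{diag}(\lambda_G^{(i)})(g(z^{(i)})+\nabla g(z^{(i)})^\top d_z^{(i)})=0$, $h(z^{(i)})+\nabla h(z^{(i)})^\top d_z^{(i)}=0$. Duals: $\lambda^{(0)}=\lambda_G^{(0)}$, $\nu^{(0)}=\nu_G^{(0)}$, $d_\lambda^{(i)}=\lambda_G^{(i)}-\lambda^{(i)}$, $d_\nu^{(i)}=\nu_G^{(i)}-\nu^{(i)}$. Slack $s^{(i)}\in\mathbb{R}^m_{\ge0}$: $s^{(i)}_j=\max\{0,-g_j(z^{(i)})\}$ if the current penalty is $0$, else $\max\{0,-g_j(z^{(i)})-\lambda^{(i)}_j/\rho\}$; $d_s^{(i)}$ is defined by $g(z^{(i)})+\nabla g(z^{(i)})^\top d_z^{(i)}+s^{(i)}+d_s^{(i)}=0$. Standing assumptions: $\mathcal{C}^{(i)}\ne\emptyset$ for all $i$; all $z^{(i)}$, $z^{(i)}+d_z^{(i)}$ lie in a compact set; $J,g,h$ and their first and second derivatives are uniformly bounded there. Assumption (R): for all $i$, $\nabla h(z^{(i)})$ together with the columns $\nabla g_j(z^{(i)})$ active in the projection problem has full column rank, and strict complementarity holds. *)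

From HB Require Import structures.
From mathcomp Require Import all_boot all_order all_algebra.
From mathcomp Require Import all_classical all_reals all_analysis.
Set Implicit Arguments. Unset Strict Implicit. Unset Printing Implicit Defensive.
Import Order.TTheory GRing.Theory Num.Theory.
Import numFieldNormedType.Exports.
Local Open Scope ring_scope.

Definition evec {R : realType} {n : nat} (i : 'I_n) : 'cV[R]_n := delta_mx i 0.

Definition dotv (R : realType) (k : nat) (u v : 'cV[R]_k) : R :=
  \sum_(j < k) u j 0 * v j 0.
Definition sqnorm (R : realType) (k : nat) (u : 'cV[R]_k) : R := dotv u u.

Definition gradS (R : realType) (n : nat) (f : 'cV[R]_n -> R) (z : 'cV[R]_n)
  : 'cV[R]_n := \col_i ('D_(evec i) f z).

(* Jacobian-transpose of a vector function: the matrix whose j-th column is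
   the gradient of the j-th component f_j (convention of the paper) *)
Definition gradV (R : realType) (n k : nat) (f : 'cV[R]_n -> 'cV[R]_k)
  (z : 'cV[R]_n) : 'M[R]_(n, k) :=
  \matrix_(i, j) ('D_(evec i) (fun x => f x j 0) z).

Definition C1 (R : realType) (n : nat) (f : 'cV[R]_n -> R) : Prop :=
  (forall x, differentiable f x) /\
  (forall i : 'I_n, continuous (fun x => 'D_(evec i) f x)).

Definition C2 (R : realType) (n : nat) (f : 'cV[R]_n -> R) : Prop :=
  C1 f /\ forall i : 'I_n, C1 (fun x => 'D_(evec i) f x).

Definition C2v (R : realType) (n k : nat) (f : 'cV[R]_n -> 'cV[R]_k) : Prop :=
  forall j : 'I_k, C2 (fun x => f x j 0).

Definition Laug (R : realType) (n m p : nat) (J : 'cV[R]_n -> R)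
  (g : 'cV[R]_n -> 'cV[R]_m) (h : 'cV[R]_n -> 'cV[R]_p) (rho : R)
  (z : 'cV[R]_n) (lam : 'cV[R]_m) (nu : 'cV[R]_p) (s : 'cV[R]_m) : R :=
  J z + dotv (g z + s) lam + dotv (h z) nu
  + rho / 2 * sqnorm (g z + s) + rho / 2 * sqnorm (h z).

Definition linFeas (R : realType) (n m p : nat)
  (g : 'cV[R]_n -> 'cV[R]_m) (h : 'cV[R]_n -> 'cV[R]_p) (z d : 'cV[R]_n) : Prop :=
  (forall j, (g z + (gradV g z)^T *m d) j 0 <= 0) /\
  h z + (gradV h z)^T *m d = 0.

Definition slack (R : realType) (n m : nat) (g : 'cV[R]_n -> 'cV[R]_m)
  (rc : R) (z : 'cV[R]_n) (lam : 'cV[R]_m) : 'cV[R]_m :=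
  \col_j (if rc == 0 then Num.max 0 (- g z j 0)
          else Num.max 0 (- g z j 0 - lam j 0 / rc)).

From HB Require Import structures.
From mathcomp Require Import all_boot all_order all_algebra.
From mathcomp Require Import all_classical all_reals all_analysis.
From mathcomp Require Import ring lra.
Import Order.TTheory GRing.Theory Num.Theory.
Import numFieldNormedType.Exports.
Local Open Scope ring_scope.
Set Implicit Arguments. Unset Strict Implicit.

(** Since [d_s = -(g + grad g^T d_z + s)] and
    [grad h^T d_z = -h], the constraint residuals [g + s] and [h] decay
    linearly along the step, so the penalty contributes
    [-rho (|g + s|^2 + |h|^2)].  Dotting the stationarity condition of the
    projection with [d_z] and using complementarity gives
    [grad J . d_z = -|d_z|^2 / alpha + lamG . g + nuG . h], hence
    [phi'(0, rho) = -|d_z|^2 / alpha + A - rho (|g + s|^2 + |h|^2)] with [A]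
    independent of [rho].  If both residuals vanish then [g = -s] and
    [A = -lamG . s <= 0]; otherwise every [rho >= A / (|g + s|^2 + |h|^2)]
    works.  This even gives the bound [-|d_z|^2 / alpha]. *)

Section Dotv.
Variables (R : realType) (k : nat).
Implicit Types (u v w : 'cV[R]_k) (a : R).

Lemma dotvC u v : dotv u v = dotv v u.
Proof. by apply: eq_bigr => j _; rewrite mulrC. Qed.

Lemma dotvDl u v w : dotv (u + v) w = dotv u w + dotv v w.
Proof. by rewrite -big_split; apply: eq_bigr => j _; rewrite mxE mulrDl. Qed.

Lemma dotvDr u v w : dotv u (v + w) = dotv u v + dotv u w.
Proof. by rewrite dotvC dotvDl !(dotvC u). Qed.

Lemma dotvZl a u v : dotv (a *: u) v = a * dotv u v.
Proof. by rewrite /dotv mulr_sumr; apply: eq_bigr => j _; rewrite mxE mulrA. Qed.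

Lemma dotvZr a u v : dotv u (a *: v) = a * dotv u v.
Proof. by rewrite dotvC dotvZl dotvC. Qed.

Lemma dotvNl u v : dotv (- u) v = - dotv u v.
Proof. by rewrite -scaleN1r dotvZl mulN1r. Qed.

Lemma dotvNr u v : dotv u (- v) = - dotv u v.
Proof. by rewrite dotvC dotvNl dotvC. Qed.

Lemma dotv0l v : dotv 0 v = 0.
Proof. by apply: big1 => j _; rewrite mxE mul0r. Qed.

Lemma dotv_ge0 u v : (forall j, 0 <= u j 0) -> (forall j, 0 <= v j 0) -> 0 <= dotv u v.
Proof. by move=> u0 v0; apply: sumr_ge0 => j _; apply: mulr_ge0. Qed.

Lemma sqnorm_ge0 u : 0 <= sqnorm u.
Proof. by apply: sumr_ge0 => j _; rewrite -expr2 sqr_ge0. Qed.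

Lemma sqnorm_eq0 u : sqnorm u = 0 -> u = 0.
Proof.
move/eqP; rewrite psumr_eq0 => [/allP u0|j _]; last by rewrite -expr2 sqr_ge0.
apply/matrixP => j l; rewrite ord1 mxE.
by move: (u0 j (mem_index_enum j)); rewrite mulf_eq0 orbb => /eqP.
Qed.

End Dotv.

Lemma dotv_mulmx (R : realType) (k l : nat) (A : 'M[R]_(k, l)) u v :
  dotv (A *m u) v = dotv u (A^T *m v).
Proof.
rewrite /dotv; under eq_bigr do rewrite mxE big_distrl /=.
rewrite exchange_big; apply: eq_bigr => j _; rewrite mxE big_distrr.
by apply: eq_bigr => i _; rewrite !mxE /= mulrCA mulrA.
Qed.

Section LineDerivative.
Variable R : realType.

Lemma is_derive_line (V W : normedModType R) (f : V -> W) (z d : V) :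
  differentiable f z -> is_derive (0 : R) 1 (fun t => f (z + t *: d)) ('D_d f z).
Proof.
move=> df.
have fline : (fun t : R => f (z + t *: d)) = (fun t => f (t *: d + z)).
  by apply/funext => t; rewrite addrC.
have Dline : 'D_1 (fun t : R => f (z + t *: d)) 0 = 'D_d f z.
  rewrite /derive; congr (lim ((_ @ 0^')%classic)); apply/funext => t /=.
  by rewrite scale0r !addr0 [t%:A]mulr1 [z + _]addrC.
apply: DeriveDef => //; rewrite fline.
exact/(derivable1P f z d)/diff_derivable.
Qed.

Lemma derive_gradS n (f : 'cV[R]_n -> R) (z d : 'cV[R]_n) :
  differentiable f z -> 'D_d f z = dotv (gradS f z) d.
Proof.
move=> df; rewrite deriveE // {1}(matrix_sum_delta d) linear_sum dotvC.
apply: eq_bigr => i _; rewrite big_ord1 linearZ /= -deriveE //.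
by rewrite !mxE.
Qed.

Definition is_derive_cV k (x : R) (u : R -> 'cV[R]_k) (du : 'cV[R]_k) :=
  forall j, is_derive x 1 (fun t => u t j 0) (du j 0).

Lemma is_derive_cV_line k (x : R) (u v : 'cV[R]_k) :
  is_derive_cV x (fun t => u + t *: v) v.
Proof.
move=> j; have -> : (fun t => (u + t *: v) j 0) = (fun t => u j 0 + t * v j 0).
  by apply/funext => t; rewrite !mxE.
have := is_deriveD (is_derive_cst (u j 0) x 1)
  (is_deriveM (is_derive_id x 1) (is_derive_cst (v j 0) x 1)).
by rewrite scaler0 !add0r /= [_%:A]mulr1.
Qed.

Lemma is_derive_cVD k (x : R) (u v : R -> 'cV[R]_k) du dv :
  is_derive_cV x u du -> is_derive_cV x v dv ->
  is_derive_cV x (fun t => u t + v t) (du + dv).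
Proof.
move=> Du Dv j; have -> : (fun t => (u t + v t) j 0) = (fun t => u t j 0 + v t j 0).
  by apply/funext => t; rewrite mxE.
by rewrite mxE; apply: is_deriveD.
Qed.

Lemma is_derive_cV_comp_line n k (g : 'cV[R]_n -> 'cV[R]_k) (z d : 'cV[R]_n) :
  (forall j, differentiable (fun x => g x j 0) z) ->
  is_derive_cV 0 (fun t => g (z + t *: d)) ((gradV g z)^T *m d).
Proof.
move=> dg j; have := is_derive_line d (dg j).
rewrite derive_gradS // mxE /dotv.
suff -> : \sum_i (gradS (fun x => g x j 0) z) i 0 * d i 0
          = \sum_i (gradV g z)^T j i * d i 0 by [].
by apply: eq_bigr => i _; rewrite !mxE.
Qed.

Lemma is_derive_dotv k (x : R) (u v : R -> 'cV[R]_k) du dv :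
  is_derive_cV x u du -> is_derive_cV x v dv ->
  is_derive x 1 (fun t => dotv (u t) (v t)) (dotv du (v x) + dotv (u x) dv).
Proof.
move=> Du Dv; rewrite /dotv -big_split /=.
have -> : (fun t => \sum_(j < k) u t j 0 * v t j 0)
          = \sum_(j < k) (fun t => u t j 0 * v t j 0).
  by apply/funext => t; rewrite fct_sumE.
apply: is_derive_sum => j; apply: is_derive_eq (is_deriveM (Du j) (Dv j)) _.
by rewrite addrC; congr (_ + _); apply: mulrC.
Qed.

End LineDerivative.

Lemma derive1_Laug_line (R : realType) (n m p : nat)
  (J : 'cV[R]_n -> R) (g : 'cV[R]_n -> 'cV[R]_m) (h : 'cV[R]_n -> 'cV[R]_p)
  (rho : R) (z dz : 'cV[R]_n) (lam dlam s ds : 'cV[R]_m) (nu dnu : 'cV[R]_p) :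
  differentiable J z -> (forall j, differentiable (fun x => g x j 0) z) ->
  (forall k, differentiable (fun x => h x k 0) z) ->
  derive1 (fun t => Laug J g h rho (z + t *: dz) (lam + t *: dlam)
                         (nu + t *: dnu) (s + t *: ds)) 0
  = dotv (gradS J z) dz + dotv ((gradV g z)^T *m dz + ds) (lam + rho *: (g z + s))
    + dotv (g z + s) dlam + dotv ((gradV h z)^T *m dz) (nu + rho *: h z)
    + dotv (h z) dnu.
Proof.
move=> dJ dg dh.
have DU := is_derive_cVD (is_derive_cV_comp_line dz dg) (is_derive_cV_line 0 s ds).
have DH := is_derive_cV_comp_line dz dh.
have DL := is_deriveD (is_deriveD (is_deriveD (is_deriveD
  (is_derive_line dz dJ)
  (is_derive_dotv DU (is_derive_cV_line 0 lam dlam)))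
  (is_derive_dotv DH (is_derive_cV_line 0 nu dnu)))
  (is_deriveZ (rho / 2) (is_derive_dotv DU DU)))
  (is_deriveZ (rho / 2) (is_derive_dotv DH DH)).
apply: etrans (derive1E _ _) _; apply: etrans (@derive_val _ _ _ _ _ _ _ DL) _.
rewrite !scale0r !addr0 derive_gradS //.
rewrite (dotvC (g z + s) (_ + ds)) (dotvC (h z) (_ *m dz)).
(* [is_deriveZ] scales in [R] seen as a normed module, which [field] cannot parse. *)
rewrite -![(rho / 2) *: _]/(rho / 2 * _) (dotvDr _ lam) (dotvDr _ nu) !dotvZr.
by field.
Qed.

Lemma penalty_threshold (R : realFieldType) (A Q : R) :
  0 <= Q -> (Q = 0 -> A <= 0) ->
  exists rhohat, 0 <= rhohat /\ forall rho, rhohat <= rho -> A - rho * Q <= 0.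
Proof.
move=> Q_ge0 A_le0; exists (Num.max 0 (A / Q)); split; first by rewrite le_max lexx.
move=> rho; rewrite ge_max => /andP[_ AQ_le].
have [Q0|Q_neq0] := eqVneq Q 0; first by rewrite Q0 mulr0 subr0 A_le0.
by rewrite subr_le0 -ler_pdivrMr // lt_def Q_neq0.
Qed.

Lemma slack_ge0 (R : realType) (n m : nat) (g : 'cV[R]_n -> 'cV[R]_m) rc z lam j :
  0 <= slack g rc z lam j 0.
Proof. by rewrite mxE; case: ifP => _; rewrite le_max lexx. Qed.

Section ProjectionStep.
Variables (R : realType) (n m p : nat).
Variables (J : 'cV[R]_n -> R) (g : 'cV[R]_n -> 'cV[R]_m) (h : 'cV[R]_n -> 'cV[R]_p).
Variables (alpha : R) (z dz : 'cV[R]_n) (lamG : 'cV[R]_m) (nuG : 'cV[R]_p).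
Hypothesis stat :
  alpha^-1 *: dz + gradS J z + gradV g z *m lamG + gradV h z *m nuG = 0.
Hypothesis compl : forall j, lamG j 0 * (g z + (gradV g z)^T *m dz) j 0 = 0.
Hypothesis lin_eq : h z + (gradV h z)^T *m dz = 0.

Lemma gradVT_h_dz : (gradV h z)^T *m dz = - h z.
Proof. by apply/eqP; rewrite -addr_eq0 addrC lin_eq. Qed.

Lemma dotv_gradS_step :
  dotv (gradS J z) dz = - alpha^-1 * sqnorm dz + dotv lamG (g z) + dotv nuG (h z).
Proof.
have compl_dir : dotv lamG ((gradV g z)^T *m dz) = - dotv lamG (g z).
  have : dotv lamG (g z + (gradV g z)^T *m dz) = 0.
    by apply: big1 => j _; apply: compl.
  by rewrite dotvDr addrC => /eqP; rewrite addr_eq0 => /eqP.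
have := congr1 (fun v => dotv v dz) stat.
rewrite dotv0l !dotvDl !dotv_mulmx dotvZl compl_dir gradVT_h_dz dotvNr => E.
by apply/eqP; rewrite -subr_eq0 -E /sqnorm; apply/eqP; ring.
Qed.

Hypotheses (dJ : differentiable J z)
  (dg : forall j, differentiable (fun x => g x j 0) z)
  (dh : forall k, differentiable (fun x => h x k 0) z).
Variables (lam s : 'cV[R]_m) (nu : 'cV[R]_p).

Lemma derive1_Laug_step rho :
  derive1 (fun t => Laug J g h rho (z + t *: dz) (lam + t *: (lamG - lam))
    (nu + t *: (nuG - nu)) (s + t *: - (g z + (gradV g z)^T *m dz + s))) 0
  = - alpha^-1 * sqnorm dz
    + (dotv lamG (g z) + dotv (g z + s) (lamG - 2 *: lam) + 2 * dotv (h z) (nuG - nu))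
    - rho * (sqnorm (g z + s) + sqnorm (h z)).
Proof.
rewrite derive1_Laug_line // dotv_gradS_step gradVT_h_dz.
have -> : (gradV g z)^T *m dz - (g z + (gradV g z)^T *m dz + s) = - (g z + s).
  by rewrite [g z + _]addrC -addrA opprD addNKr.
rewrite /sqnorm !dotvNl !dotvDr !dotvZr !dotvDr !dotvNr !dotvZr (dotvC nuG).
ring.
Qed.

Hypotheses (lamG_ge0 : forall j, 0 <= lamG j 0) (s_ge0 : forall j, 0 <= s j 0).

Lemma penalty_excess_le0 :
  sqnorm (g z + s) + sqnorm (h z) = 0 ->
  dotv lamG (g z) + dotv (g z + s) (lamG - 2 *: lam) + 2 * dotv (h z) (nuG - nu) <= 0.
Proof.
move/eqP; rewrite paddr_eq0 ?sqnorm_ge0 //.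
move=> /andP[/eqP/sqnorm_eq0 U0 /eqP/sqnorm_eq0 ->].
have gz : g z = - s by apply/eqP; rewrite -addr_eq0 U0.
by rewrite U0 !dotv0l mulr0 !addr0 gz dotvNr oppr_le0 dotv_ge0.
Qed.

Lemma exists_penalty_descent :
  exists rhohat, 0 <= rhohat /\ forall rho, rhohat <= rho ->
    derive1 (fun t => Laug J g h rho (z + t *: dz) (lam + t *: (lamG - lam))
      (nu + t *: (nuG - nu)) (s + t *: - (g z + (gradV g z)^T *m dz + s))) 0
    <= - alpha^-1 * sqnorm dz.
Proof.
have Q_ge0 : 0 <= sqnorm (g z + s) + sqnorm (h z) by rewrite addr_ge0 ?sqnorm_ge0.
have [rhohat [rhohat_ge0 excess_le0]] := penalty_threshold Q_ge0 penalty_excess_le0.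
exists rhohat; split=> // rho /excess_le0 descent.
by rewrite derive1_Laug_step -addrA gerDl.
Qed.

End ProjectionStep.

Theorem lemma4p5 (R : realType) (n m p : nat)
  (J : 'cV[R]_n -> R) (g : 'cV[R]_n -> 'cV[R]_m) (h : 'cV[R]_n -> 'cV[R]_p)
  (hJ : C2 J) (hg : C2v g) (hh : C2v h)
  (alpha : R) (halpha : 0 < alpha)
  (z : 'cV[R]_n) (lam : 'cV[R]_m) (nu : 'cV[R]_p) (rc : R) (hrc : 0 <= rc)
  (dz : 'cV[R]_n) (lamG : 'cV[R]_m) (nuG : 'cV[R]_p)
  (* d_z is the Euclidean projection of -alpha grad J(z) onto C *)
  (hdzC : linFeas g h z dz)
  (hproj : forall d, linFeas g h z d ->
     sqnorm (dz + alpha *: gradS J z) <= sqnorm (d + alpha *: gradS J z))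
  (* KKT multipliers of the projection problem *)
  (hlamG : forall j, 0 <= lamG j 0)
  (hstat : alpha^-1 *: dz + gradS J z + gradV g z *m lamG + gradV h z *m nuG = 0)
  (hcompl : forall j, lamG j 0 * (g z + (gradV g z)^T *m dz) j 0 = 0)
  (heq : h z + (gradV h z)^T *m dz = 0)
  (* Assumption (R) at this iterate: linear independence of grad h and the
     active grad g_j, and strict complementarity *)
  (hLICQ : forall (a : 'cV[R]_p) (b : 'cV[R]_m),
     (forall j, (g z + (gradV g z)^T *m dz) j 0 != 0 -> b j 0 = 0) ->
     gradV h z *m a + gradV g z *m b = 0 -> a = 0 /\ b = 0)
  (hstrict : forall j, (g z + (gradV g z)^T *m dz) j 0 = 0 -> 0 < lamG j 0) :
  let s := slack g rc z lam in
  let dlam := lamG - lam in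
  let dnu := nuG - nu in
  let ds := - (g z + (gradV g z)^T *m dz + s) in
  let phi := fun (rho t : R) =>
    Laug J g h rho (z + t *: dz) (lam + t *: dlam) (nu + t *: dnu) (s + t *: ds) in
  exists rhohat : R, 0 <= rhohat /\
    forall rho : R, rhohat <= rho ->
      derive1 (phi rho) 0 <= - (2 * alpha)^-1 * sqnorm dz.
Proof.
move=> s dlam dnu ds phi.
have [rhohat [rhohat_ge0 descent]] := exists_penalty_descent hstat hcompl heq
  (hJ.1.1 z) (fun j => (hg j).1.1 z) (fun k => (hh k).1.1 z) lam nu
  hlamG (slack_ge0 g rc z lam).
exists rhohat; split=> // rho /descent le_descent; apply: le_trans le_descent _.
have step_ge0 : 0 <= alpha^-1 * sqnorm dz.
  by rewrite mulr_ge0 ?sqnorm_ge0 // invr_ge0 ltW.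
rewrite invfM !mulNr -mulrA lerN2; lra.
Qed.
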